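(* Let $S>0$ and let $D=(D[1],\dots,D[n])$ be a vector of demands with $0<D[i]\le S$ for all $i$. Then there exists an integer $k$ with $1\le k\le a(n)$ such that the egalitarian connection-time of the electricity division instance $(S,D)$ equals $\frac{k}{OPT(D_k)}$. Moreover, this value is attained by taking an optimal $k$-times bin packing of $D$ (with $OPT(D_k)$ bins) and connecting the set of households in each bin during a fraction $\frac{1}{OPT(D_k)}$ of the time interval (the bins being connected during pairwise disjoint subintervals).
   Context: Electricity division: there is a supply $S>0$, $n$ households with demands $D[1],\dots,D[n]$, and a time interval $[0,T]$. A schedule is a partition of $[0,T]$ into finitely many subintervals $I_1,\dots,I_p$ together with sets $A_1,\dots,A_p\subseteq\{1,\dots,n\}$ such that $\sum_{i\in A_l}D[i]\le S$ for each $l$; household $i$ receives connection time $u_i=\sum_{l:\,i\in A_l}|I_l|$. The egalitarian connection-time is $\max_{\text{schedules}}\min_i u_i/T$ (the largest fraction of the time that every household can simultaneously be guaranteed). $k$-times bin packing: given a bin capacity $S$, items $1,\dots,n$ with sizes $D[i]$, and an integer $k\ge1$, $D_k$ denotes the collection of $k$ copies of each item; a $k$-times bin packing is an assignment of all copies in $D_k$ to bins such that the total size in each bin is at most $S$ and no bin contains two copies of the same item (so each item lies in exactly $k$ distinct bins). $OPT(D_k)$ is the minimum number of bins of a $k$-times bin packing. For a positive integer $n$, $a(n)$ denotes the maximum determinant of an $n\times n$ matrix all of whose entries are $0$ or $1$. *)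

From HB Require Import structures.
From mathcomp Require Import all_boot all_order all_algebra.
From mathcomp Require Import reals.
Set Implicit Arguments. Unset Strict Implicit. Unset Printing Implicit Defensive.
Import Order.TTheory GRing.Theory Num.Theory.
Local Open Scope ring_scope.

Section Defs.
Variables (R : realType) (n : nat) (S : R) (D : 'I_n -> R).

Definition feasible (A : {set 'I_n}) : bool := \sum_(i in A) D i <= S.

(* A schedule on [0,T]: a finite sequence of consecutive subintervals, given
   by their lengths, each with a feasible set of connected households. *)
Definition is_schedule (T : R) (s : seq (R * {set 'I_n})) : Prop :=
  (forall p, p \in s -> 0 <= p.1) /\
  (forall p, p \in s -> feasible p.2) /\
  \sum_(p <- s) p.1 = T.

Definition conn_time (s : seq (R * {set 'I_n})) (i : 'I_n) : R :=
  \sum_(p <- s | i \in p.2) p.1.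

(* v = max over schedules of min_i u_i / T *)
Definition egalitarian_value (T v : R) : Prop :=
  (exists s, is_schedule T s /\ forall i, v <= conn_time s i / T) /\
  (forall s, is_schedule T s -> exists i, conn_time s i / T <= v).

(* k-times bin packing: a sequence of bins (sets, so no two copies of an item
   share a bin), each of total size <= S, each item in exactly k bins *)
Definition is_kpacking (k : nat) (B : seq {set 'I_n}) : Prop :=
  (forall A, A \in B -> feasible A) /\
  (forall i : 'I_n, count (fun A : {set 'I_n} => i \in A) B = k).

Definition is_OPT (k m : nat) : Prop :=
  (exists B, is_kpacking k B /\ size B = m) /\
  (forall B, is_kpacking k B -> (m <= size B)%N).

Definition packing_schedule (T : R) (B : seq {set 'I_n}) : seq (R * {set 'I_n}) :=
  [seq (T / (size B)%:R, A) | A <- B].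
End Defs.

Definition maxdet01 (m : nat) : int :=
  \big[Order.max/0%R]_(M : 'M[bool]_m) \det (map_mx (fun b : bool => (b%:R : int)) M).

From HB Require Import structures.
From mathcomp Require Import all_boot all_order all_algebra.
From mathcomp Require Import reals.
From mathcomp Require Import ring lra zify.
From Stdlib Require Import Classical Wf_nat.
Import Order.TTheory GRing.Theory Num.Theory.
Local Open Scope ring_scope.
Set Implicit Arguments. Unset Strict Implicit. Unset Printing Implicit Defensive.

(* If some schedule connects every household for at least a time x > 0, its
   sets, weighted by length / x, form a fractional cover of the households by
   feasible sets, of total weight T / x.  Since feasibility is closed under
   taking subsets the cover can be made exact, and then reduced, without
   increasing its weight, to one whose support has linearly independent
   incidence vectors.  By Cramer's rule k times this cover is integral for k
   the absolute value of a nonzero minor of a 0/1 matrix, so k <= a(n), and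
   the integral cover is a k-times bin packing with at most k T / x bins.
   Hence x / T <= k / OPT(D_k) for some k <= a(n), and the packing schedule of
   the k maximizing k / OPT(D_k) attains the bound. *)

Definition det01 m (M : 'M[bool]_m) : int :=
  \det (map_mx (fun b : bool => b%:R : int) M).

Lemma det01_le_maxdet01 m (M : 'M[bool]_m) : det01 M <= maxdet01 m.
Proof. exact: le_bigmax. Qed.

Definition bool_id m : 'M[bool]_m := \matrix_(i, j) (i == j).

Lemma det01_id m : det01 (bool_id m) = 1.
Proof.
rewrite /det01 (_ : map_mx _ _ = 1%:M) ?det1 //; apply/matrixP => i j.
by rewrite !mxE; case: (i == j).
Qed.

Lemma maxdet01_ge1 m : 1 <= maxdet01 m.
Proof. by rewrite -(det01_id m) det01_le_maxdet01. Qed.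

Lemma det01_block_id d p (C : 'M[bool]_p) :
  det01 (block_mx (bool_id d) (const_mx false) (const_mx false) C) = det01 C.
Proof.
have map0 a b : map_mx (fun b : bool => b%:R : int) (const_mx false : 'M_(a, b)) = 0.
  by apply/matrixP => i j; rewrite !mxE.
rewrite /det01 map_block_mx !map0.
by rewrite det_ublock -[\det (map_mx _ (bool_id d))]/(det01 _) det01_id mul1r.
Qed.

Lemma det01_xrow m (C : 'M[bool]_m) (i1 i2 : 'I_m) : i1 != i2 ->
  det01 (xrow i1 i2 C) = - det01 C.
Proof.
move=> ne; rewrite /det01 map_xrow xrowE det_mulmx det_perm perm.odd_tperm ne.
by rewrite expr1 mulN1r.
Qed.

Lemma abs_det01_le_maxdet01 p m (C : 'M[bool]_p) : (p <= m)%N ->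
  `|det01 C| <= maxdet01 m.
Proof.
move=> /subnK <-; have [C0|C0] := leP 0 (det01 C).
  by rewrite ger0_norm // -(det01_block_id (m - p)) det01_le_maxdet01.
rewrite ltr0_norm //; case: p C C0 => [|[|p]] C C0.
- by move: C0; rewrite /det01 det_mx00.
- by move: C0; rewrite /det01 det_mx11 mxE; case: (C 0 0).
by rewrite -(det01_xrow C (i1 := 0) (i2 := 1)) // -(det01_block_id (m - p.+2)) det01_le_maxdet01.
Qed.

Section FractionalCover.
Variables (R : realFieldType) (I : finType) (F : pred {set I}).
Hypothesis F_sub : forall A B : {set I}, A \subset B -> F B -> F A.
Implicit Types (w z : {set I} -> R) (i j : I) (A B : {set I}).

Definition coverage w i := \sum_(A : {set I} | i \in A) w A.
Definition total_weight w := \sum_(A : {set I}) w A.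
Definition supp w := [set A | w A != 0].
Definition admissible w := (forall A, 0 <= w A) /\ (forall A, A \in supp w -> F A).
Definition independent w := forall z, supp z \subset supp w ->
  (forall i, coverage z i = 0) -> forall A, z A = 0.

Definition shrink w i mu B := if i \in B then mu * w B else w B + (1 - mu) * w (i |: B).

Lemma sum_shrink w i mu (P : pred {set I}) :
  (forall B, i \notin B -> P (i |: B) = P B) ->
  \sum_(B | P B) shrink w i mu B = \sum_(B | P B) w B.
Proof.
move=> PiU; rewrite !(bigID (fun B => i \in B) P) /=.
have add_i : \sum_(B | P B && (i \in B)) w B = \sum_(B | P B && (i \notin B)) w (i |: B).
  rewrite (reindex_onto (fun B => i |: B) (fun A => A :\ i)) /=; last first.
    by move=> A /andP[_ iA]; rewrite setD1K.
  apply: eq_bigl => B; rewrite setU11 andbT; case: (boolP (i \in B)) => iB /=.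
    by rewrite andbF; apply/negbTE/nandP; right; apply: contraL iB => /eqP <-; rewrite setD11.
  by rewrite PiU // setU1K // eqxx !andbT.
rewrite [X in X + _ = _](eq_bigr (fun B => mu * w B)); last first.
  by move=> B /andP[_ iB]; rewrite /shrink iB.
rewrite [X in _ + X = _](eq_bigr (fun B => w B + (1 - mu) * w (i |: B))); last first.
  by move=> B /andP[_ /negbTE iB]; rewrite /shrink iB.
rewrite big_split -!mulr_sumr /= -add_i; lra.
Qed.

Lemma admissible_shrink w i mu : admissible w -> 0 <= mu <= 1 ->
  admissible (shrink w i mu).
Proof.
move=> [w0 wF] /andP[mu0 mu1]; split=> B; rewrite /shrink.
  case: ifP => _; first exact: mulr_ge0.
  by rewrite addr_ge0 // mulr_ge0 // subr_ge0.
rewrite inE; case: ifP => _ h.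
  by apply: wF; rewrite inE; apply: contraNneq h => ->; rewrite mulr0.
have [wB0|wB0] := eqVneq (w B) 0; last by apply: wF; rewrite inE.
apply: (F_sub (subsetUr [set i] B)); apply: wF; rewrite inE.
by apply: contraNneq h => ->; rewrite wB0 mulr0 addr0.
Qed.

Lemma total_shrink w i mu : total_weight (shrink w i mu) = total_weight w.
Proof. exact: sum_shrink. Qed.

Lemma coverage_shrink w i mu : coverage (shrink w i mu) i = mu * coverage w i.
Proof. by rewrite /coverage mulr_sumr; apply: eq_bigr => B iB; rewrite /shrink iB. Qed.

Lemma coverage_shrink_neq w i mu j : j != i ->
  coverage (shrink w i mu) j = coverage w j.
Proof. by move=> ji; apply: sum_shrink => B _; rewrite in_setU1 (negbTE ji). Qed.

Lemma exists_exact_cover w : admissible w -> (forall i, 1 <= coverage w i) ->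
  exists w', [/\ admissible w', total_weight w' = total_weight w & forall i, coverage w' i = 1].
Proof.
move=> aw cw.
suff [w' [aw' tw' _ cw']] : exists w', [/\ admissible w', total_weight w' = total_weight w,
    forall i, 1 <= coverage w' i & forall i, i \in enum I -> coverage w' i = 1].
  by exists w'; split=> // i; apply: cw'; rewrite mem_enum.
elim: (enum I) => [|i s [w1 [aw1 tw1 cw1 ew1]]]; first by exists w.
have c0 : 0 < coverage w1 i by apply: lt_le_trans (cw1 i).
set w2 := shrink w1 i (coverage w1 i)^-1.
have cw2 j : coverage w2 j = if j == i then 1 else coverage w1 j.
  have [->|ji] := eqVneq j i; last exact: coverage_shrink_neq.
  by rewrite coverage_shrink mulVf ?gt_eqF.
exists w2; split.
- by apply: admissible_shrink => //; rewrite invr_ge0 ltW //= invr_le1 ?unitf_gt0.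
- by rewrite total_shrink.
- by move=> j; rewrite cw2; case: eqP.
- by move=> j; rewrite inE cw2; case: eqP => //= _; apply: ew1.
Qed.

Lemma exists_neg_of_total_le0 z A0 : total_weight z <= 0 -> z A0 != 0 -> exists A, z A < 0.
Proof.
move=> tz zA0; case: (arg_minP z (P := xpredT) (i0 := A0) isT) => A _ Amin.
have [zA|zA] := ltP (z A) 0; first by exists A.
have z0 B : 0 <= z B by apply: le_trans zA (Amin B isT).
have t0 : total_weight z = 0 by apply/eqP; rewrite eq_le tz sumr_ge0.
by move/eqP: zA0; rewrite (psumr_eq0P (fun B _ => z0 B) t0).
Qed.

Lemma exists_descent_direction w : ~ independent w ->
  exists z, [/\ supp z \subset supp w, forall i, coverage z i = 0, total_weight z <= 0
              & exists A, z A < 0].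
Proof.
move=> nind.
have [z [zs zc [A0 zA0]]] : exists z, [/\ supp z \subset supp w,
    forall i, coverage z i = 0 & exists A, z A != 0].
  apply: NNPP => H; apply: nind => z zs zc A; apply: NNPP => zA.
  by apply: H; exists z; split=> //; exists A; apply/eqP.
have [tz|tz] := leP (total_weight z) 0.
  by exists z; split=> //; apply: exists_neg_of_total_le0 tz zA0.
pose z' A := - z A.
have tz' : total_weight z' <= 0 by rewrite /total_weight sumrN oppr_le0 ltW.
exists z'; split=> //.
- by apply/subsetP => A; rewrite inE oppr_eq0 => zA; apply: (subsetP zs); rewrite inE.
- by move=> i; rewrite /coverage sumrN -/(coverage z i) zc oppr0.
- by apply: (exists_neg_of_total_le0 (A0 := A0)); rewrite // /z' oppr_eq0.
Qed.

Lemma support_reduction w : admissible w -> (forall i, coverage w i = 1) ->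
  ~ independent w -> exists w', [/\ admissible w', total_weight w' <= total_weight w,
    forall i, coverage w' i = 1 & (#|supp w'| < #|supp w|)%N].
Proof.
move=> [w0 wF] cw nind.
have [z [zs zc tz [A1 zA1]]] := exists_descent_direction nind.
case: (arg_minP (fun A => w A / - z A) (P := fun A => z A < 0) zA1) => As zAs minAs.
(* The largest step along [z] keeping all weights nonnegative; it kills the
   weight of [As], and [total_weight z <= 0] makes it cost nothing. *)
set eps := w As / - z As.
have eps0 : 0 <= eps by rewrite divr_ge0 // oppr_ge0 ltW.
pose w' A := w A + eps * z A.
have sumw' (P : pred {set I}) :
    \sum_(A | P A) w' A = \sum_(A | P A) w A + eps * \sum_(A | P A) z A.
  by rewrite big_split mulr_sumr.
have w'0 A : 0 <= w' A.
  have [zA|zA] := ltP (z A) 0; last by rewrite addr_ge0 // mulr_ge0.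
  have := minAs A zA; rewrite ler_pdivlMr ?oppr_gt0 // mulrN -/eps => h.
  by rewrite /w'; lra.
have z_off A : w A = 0 -> z A = 0.
  by move=> wA; apply/eqP; have /implyP := subsetP zs A; rewrite !inE wA eqxx implybF negbK.
have supp_w' : supp w' \subset supp w :\ As.
  apply/subsetP => A; rewrite !inE; apply: contraNT; rewrite negb_and !negbK.
  case/orP => [/eqP ->|/eqP wA]; last by rewrite /w' wA z_off // mulr0 addr0.
  by rewrite /w' /eps; apply/eqP; field; rewrite lt_eqF.
have AsS : As \in supp w by apply: (subsetP zs); rewrite inE lt_eqF.
exists w'; split.
- split=> // A /(subsetP supp_w'); rewrite in_setD1 => /andP[_]; exact: wF.
- by rewrite /total_weight sumw' gerDl mulr_ge0_le0.
- by move=> i; rewrite /coverage sumw' -/(coverage w i) -/(coverage z i) cw zc mulr0 addr0.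
- by rewrite (cardsD1 As (supp w)) AsS add1n ltnS subset_leq_card.
Qed.

Lemma exists_independent_cover w : admissible w -> (forall i, coverage w i = 1) ->
  exists w', [/\ admissible w', total_weight w' <= total_weight w,
    forall i, coverage w' i = 1 & independent w'].
Proof.
have [N ltN] := ubnP #|supp w|; elim: N w ltN => // N IH w ltN aw cw.
have [ind|nind] := classic (independent w); first by exists w.
have [w1 [aw1 tw1 cw1 lt1]] := support_reduction aw cw nind.
have [w2 [aw2 tw2 cw2 ind2]] := IH w1 (leq_trans lt1 ltN) aw1 cw1.
by exists w2; split=> //; apply: le_trans tw2 tw1.
Qed.
End FractionalCover.

Section EnumVal.
Variables (T : finType) (S : {set T}).

Lemma sum_enum_val (V : nmodType) (z : T -> V) (P : pred T) :
  (forall A, A \notin S -> z A = 0) ->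
  \sum_(A | P A) z A = \sum_(j < #|S| | P (enum_val j)) z (enum_val j).
Proof.
move=> zS; rewrite -big_enum_val_cond (bigID (mem S)) /= [X in _ + X]big1 ?addr0.
  by apply: eq_bigl => A; rewrite andbC.
by move=> A /andP[_ /zS].
Qed.

Definition lift_enum (V : Type) (x0 : V) (v : 'I_#|S| -> V) (A : T) : V :=
  if [pick j | enum_val j == A] is Some j then v j else x0.

Lemma lift_enum_val V (x0 : V) v j : lift_enum x0 v (enum_val j) = v j.
Proof.
rewrite /lift_enum; case: pickP => [j' /eqP/enum_val_inj -> //|].
by move/(_ j); rewrite eqxx.
Qed.

Lemma lift_enum_notin V (x0 : V) v A : A \notin S -> lift_enum x0 v A = x0.
Proof.
move=> AS; rewrite /lift_enum; case: pickP => // j /eqP ejA.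
by move: AS; rewrite -ejA enum_valP.
Qed.
End EnumVal.
Arguments lift_enum {T} S {V} x0 v A.

Lemma det_mul_solution (R : comNzRingType) p (C : 'M[int]_p) (y : 'cV[R]_p) :
  map_mx intr C *m y = const_mx 1 ->
  forall j, (\det C)%:~R * y j 0 = (\sum_a \adj C j a)%:~R.
Proof.
move=> Cy j; have := congr1 (fun M => (\adj (map_mx intr C) *m M) j 0) Cy.
rewrite /= mulmxA mul_adj_mx mul_scalar_mx det_map_mx !mxE => ->.
by rewrite rmorph_sum; apply: eq_bigr => a _; rewrite -map_mx_adj !mxE mulr1.
Qed.

Section Integrality.
Variables (R : realFieldType) (n : nat) (w : {set 'I_n} -> R).
Local Notation S := (supp w).
Local Notation e := (@enum_val _ (mem S)).

Definition incidence_mx : 'M[R]_(n, #|S|) := \matrix_(i, j) (i \in e j)%:R.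

Lemma independent_incidence_row_full : independent w -> row_full incidence_mx.
Proof.
move=> ind; rewrite /row_full -mxrank_tr; apply: inj_row_free => v vM.
pose z := lift_enum S 0 (fun j => v 0 j).
have zS A : A \notin S -> z A = 0 by apply: lift_enum_notin.
have zc i : coverage z i = 0.
  have := congr1 (fun M : 'rV[R]_n => M 0 i) vM; rewrite !mxE => <-.
  rewrite /coverage (sum_enum_val _ zS) big_mkcond; apply: eq_bigr => j _.
  by rewrite !mxE /z lift_enum_val; case: (i \in e j); rewrite ?mulr1 ?mulr0.
have zsupp : supp z \subset S.
  by apply/subsetP => A; rewrite inE; apply: contraR => /zS ->.
apply/matrixP => a j; rewrite ord1 mxE -(lift_enum_val (S := S) 0 (fun j => v 0 j)).
exact: ind zsupp zc _.
Qed.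

Lemma independent_cover_integral : (forall A, 0 <= w A) ->
  (forall i, coverage w i = 1) -> independent w ->
  exists k (c : {set 'I_n} -> nat),
    [/\ (0 < k)%N, k%:Z <= maxdet01 n & forall A, (c A)%:R = k%:R * w A].
Proof.
move=> w0 cw ind; have full := independent_incidence_row_full ind.
set f := fullrankfun full.
have card_S : (#|S| <= n)%N.
  by have := leq_card f (@fullrankfun_inj _ _ _ _ full); rewrite !card_ord.
pose C : 'M[bool]_#|S| := \matrix_(a, j) (f a \in e j).
pose Cz := map_mx (fun b : bool => b%:R : int) C.
have CE : rowsub f incidence_mx = map_mx intr Cz.
  by apply/matrixP => a j; rewrite !mxE; case: (f a \in e j).
have wS A : A \notin S -> w A = 0 by rewrite inE negbK => /eqP.
have Cy : map_mx intr Cz *m (\col_j w (e j)) = const_mx 1.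
  apply/matrixP => a b; rewrite -CE !mxE -(cw (f a)) /coverage (sum_enum_val _ wS).
  rewrite [RHS]big_mkcond; apply: eq_bigr => j _; rewrite !mxE.
  by case: (f a \in e j); rewrite ?mul1r ?mul0r.
(* Cramer's rule for this nonsingular 0/1 system makes [det01 C * w] integral. *)
have C0 : det01 C != 0.
  by have := fullrowsub_unit full; rewrite CE unitmxE det_map_mx unitfE intr_eq0.
exists `|det01 C|%N, (lift_enum S 0%N (fun j => `|(\sum_a \adj Cz j a)%R|%N)); split.
- by rewrite absz_gt0.
- by rewrite abszE; apply: abs_det01_le_maxdet01.
- move=> A; have [AS|AS] := boolP (A \in S); last by rewrite lift_enum_notin ?wS ?mulr0.
  rewrite -(enum_rankK_in AS AS) lift_enum_val !natr_absz !intr_norm -(det_mul_solution Cy) mxE.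
  by rewrite normrM (ger0_norm (w0 _)).
Qed.
End Integrality.

Section MultisetSeq.
Variables (T : finType) (c : T -> nat).

Definition multiset_seq : seq T := flatten [seq nseq (c x) x | x <- enum T].

Lemma count_multiset_seq (P : pred T) : count P multiset_seq = (\sum_(x | P x) c x)%N.
Proof.
rewrite count_flatten -map_comp sumnE big_map big_enum [RHS]big_mkcond /=.
by apply: eq_bigr => x _; rewrite count_nseq; case: (P x); rewrite ?mul1n.
Qed.

Lemma size_multiset_seq : size multiset_seq = (\sum_x c x)%N.
Proof. by rewrite -(count_predT multiset_seq) count_multiset_seq. Qed.

Lemma multiset_seq_gt0 x : x \in multiset_seq -> (0 < c x)%N.
Proof.
by move=> /flattenP[s /mapP[y _ ->]]; rewrite mem_nseq => /andP[cy /eqP ->].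
Qed.
End MultisetSeq.

Lemma fractional_cover_rounding (R : realFieldType) n (F : pred {set 'I_n})
    (F_sub : forall A B : {set 'I_n}, A \subset B -> F B -> F A) (w : {set 'I_n} -> R) :
  admissible F w -> (forall i, 1 <= coverage w i) ->
  exists k (B : seq {set 'I_n}), [/\ (0 < k)%N, k%:Z <= maxdet01 n,
    forall A, A \in B -> F A, forall i, count (fun A : {set 'I_n} => i \in A) B = k
    & (size B)%:R <= k%:R * total_weight w].
Proof.
move=> aw cw; have [w1 [aw1 tw1 cw1]] := exists_exact_cover F_sub aw cw.
have [w2 [[w20 w2F] tw2 cw2 ind2]] := exists_independent_cover aw1 cw1.
have [k [c [k0 kmax cE]]] := independent_cover_integral w20 cw2 ind2.
have sum_c (P : pred {set 'I_n}) :
    (\sum_(A | P A) c A)%N%:R = k%:R * \sum_(A | P A) w2 A :> R.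
  by rewrite natr_sum mulr_sumr; apply: eq_bigr => A _; rewrite cE.
exists k, (multiset_seq c); split=> //.
- move=> A /multiset_seq_gt0; rewrite -(ltr0n R) cE => ck; apply: w2F.
  by rewrite inE; apply: contraTneq ck => ->; rewrite mulr0 ltxx.
- move=> i; apply/eqP; rewrite -(eqr_nat R) count_multiset_seq sum_c.
  by rewrite -/(coverage w2 i) cw2 mulr1.
- by rewrite size_multiset_seq sum_c -/(total_weight w2) -tw1 ler_wpM2l.
Qed.

Lemma exists_max_rel d (T : orderType d) (P : nat -> T -> Prop) N :
  (forall k, exists x, P k x) -> (forall k x y, P k x -> P k y -> x = y) ->
  (0 < N)%N -> exists k x, [/\ (0 < k <= N)%N, P k x &
    forall k' y, (0 < k' <= N)%N -> P k' y -> (y <= x)%O].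
Proof.
move=> Ptot Pfun; elim: N => // N IH _; have [y Py] := Ptot N.+1.
have [N0|N0] := posnP N.
  rewrite N0 in Py *; exists 1%N, y; split=> // k' y' k'1.
  have -> : k' = 1%N by lia.
  by move=> /(Pfun _ _ _ Py) ->.
have [k [x [kN Pk xmax]]] := IH N0.
have cases k' y' : (0 < k' <= N.+1)%N -> P k' y' -> (y' <= x)%O \/ y' = y.
  case/andP=> k'0; rewrite leq_eqVlt ltnS => /orP[/eqP -> Py'|k'N Py'].
    by right; apply: Pfun Py' Py.
  by left; apply: xmax Py'; rewrite k'0.
have [yx|xy] := leP y x.
  exists k, x; split=> //; first by move: kN => /andP[-> /leqW].
  by move=> k' y' k'N Py'; case: (cases _ _ k'N Py') => [//|->].
exists N.+1, y; split=> [|//|k' y' k'N Py']; first by rewrite leqnn.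
by case: (cases _ _ k'N Py') => [y'x|->]; first exact: le_trans y'x (ltW xy).
Qed.

Section Electricity.
Variables (R : realType) (n : nat) (S : R) (D : 'I_n -> R).
Hypotheses (D_ge0 : forall i, 0 <= D i) (D_leS : forall i, D i <= S).
Implicit Types (A B : {set 'I_n}) (k m : nat) (T : R).

Lemma feasible_subset A B : A \subset B -> feasible S D B -> feasible S D A.
Proof.
move=> AB; apply: le_trans; rewrite [leRHS](big_setID A) /= (setIidPr AB) lerDl.
exact: sumr_ge0.
Qed.

Lemma singletons_kpacking k :
  is_kpacking S D k (map set1 (multiset_seq (fun _ : 'I_n => k))).
Proof.
split=> [_ /mapP[i _ ->]|i]; first by rewrite /feasible big_set1.
rewrite count_map count_multiset_seq (big_pred1 i) // => j.
by rewrite /= in_set1 eq_sym.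
Qed.

Lemma exists_OPT k : exists m, is_OPT S D k m.
Proof.
pose P m := exists Bs, is_kpacking S D k Bs /\ size Bs = m.
have P_ex : exists m, P m by do 2!eexists; split; first exact: singletons_kpacking.
have [m [[Pm m_least] _]] :=
  @dec_inh_nat_subset_has_unique_least_element P (fun m => classic (P m)) P_ex.
by exists m; split=> // Bs kBs; apply/ssrnat.leP/m_least; exists Bs.
Qed.

Lemma is_OPT_functional k m m' : is_OPT S D k m -> is_OPT S D k m' -> m = m'.
Proof.
by move=> [[B [kB <-]] Bmin] [[B' [kB' <-]] B'min]; apply/eqP; rewrite eqn_leq Bmin // B'min.
Qed.

Lemma kpacking_size_gt0 k Bs : (0 < n)%N -> (0 < k)%N -> is_kpacking S D k Bs ->
  (0 < size Bs)%N.
Proof.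
by move=> n0 k0 [_ cnt]; rewrite -(cnt (Ordinal n0)) in k0; apply: leq_trans k0 (count_size _ _).
Qed.

Lemma packing_schedule_spec k Bs T : (0 < n)%N -> (0 < k)%N -> 0 < T ->
  is_kpacking S D k Bs -> is_schedule S D T (packing_schedule T Bs) /\
  forall i, conn_time (packing_schedule T Bs) i / T = k%:R / (size Bs)%:R.
Proof.
move=> n0 k0 T0 kBs; have [Bs_feas cnt] := kBs.
have size0 : (size Bs)%:R != 0 :> R by rewrite pnatr_eq0 -lt0n (kpacking_size_gt0 n0 k0 kBs).
split; [split; [|split]|] => [p /mapP[A _ ->]|p /mapP[A AB ->]||i] /=.
- by rewrite divr_ge0 // ltW.
- exact: Bs_feas.
- by rewrite big_map big_const_seq iter_addr_0 count_predT -[LHS]mulr_natr divfK.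
- rewrite /conn_time /packing_schedule big_map big_const_seq iter_addr_0 cnt -[_ *+ k]mulr_natr.
  by rewrite mulrC mulrA mulKf ?gt_eqF // mulrC.
Qed.

Definition schedule_weight (s : seq (R * {set 'I_n})) A := \sum_(p <- s | p.2 == A) p.1.

Lemma sum_schedule_weight s (P : pred {set 'I_n}) :
  \sum_(A | P A) schedule_weight s A = \sum_(p <- s | P p.2) p.1.
Proof.
rewrite (exchange_big_dep (fun p => P p.2)) /= => [|A p PA /eqP -> //].
apply: eq_bigr => p Pp; rewrite (big_pred1 p.2) // => A.
by rewrite eq_sym andb_idl // => /eqP ->.
Qed.

Lemma schedule_le_OPT_ratio T s : (0 < n)%N -> 0 < T -> is_schedule S D T s ->
  exists i k m, [/\ (0 < k)%N, k%:Z <= maxdet01 n, is_OPT S D k m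
    & conn_time s i / T <= k%:R / m%:R].
Proof.
move=> n0 T0 [s_ge0 [s_feas sT]].
case: (arg_minP (conn_time s) (P := xpredT) (i0 := Ordinal n0) isT) => i _ imin.
exists i; set x := conn_time s i.
have [x_le0|x_gt0] := leP x 0.
  have [m Hm] := exists_OPT 1; exists 1%N, m; split=> //; first exact: maxdet01_ge1.
  apply: (@le_trans _ _ 0); first by rewrite mulr_le0_ge0 // invr_ge0 ltW.
  by rewrite divr_ge0.
pose w A := schedule_weight s A / x.
have sum_w (P : pred {set 'I_n}) : \sum_(A | P A) w A = (\sum_(p <- s | P p.2) p.1) / x.
  by rewrite /w -mulr_suml sum_schedule_weight.
have aw : admissible (feasible S D) w.
  split=> A; rewrite ?inE /w /schedule_weight big_seq_cond.
    by rewrite divr_ge0 ?(ltW x_gt0) //; apply: sumr_ge0 => p /andP[/s_ge0].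
  apply: contraNT => nfA; rewrite big_pred0 ?mul0r // => p.
  by apply: contraNF nfA => /andP[/s_feas + /eqP <-].
have cw j : 1 <= coverage w j by rewrite /coverage sum_w ler_pdivlMr // mul1r imin.
have [k [Bs [k0 kmax Bs_feas cnt size_le]]] := fractional_cover_rounding feasible_subset aw cw.
have [m Hm] := exists_OPT k; exists k, m; split=> //.
have m_le : (m <= size Bs)%N by case: Hm => _ /(_ Bs (conj Bs_feas cnt)).
have m_gt0 : (0 < m)%N by case: Hm => [[Bm [kBm <-]] _]; apply: kpacking_size_gt0 kBm.
rewrite /total_weight sum_w sT in size_le.
rewrite ler_pdivrMr // mulrAC ler_pdivlMr ?ltr0n //.
apply: (@le_trans _ _ (x * (size Bs)%:R)); first by rewrite ler_pM2l // ler_nat.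
by rewrite mulrC -ler_pdivlMr // -mulrA.
Qed.
End Electricity.

Theorem theorem1 (R : realType) (n : nat) (S : R) (D : 'I_n -> R)
  (hn : (0 < n)%N) (hS : 0 < S) (hD : forall i, 0 < D i <= S) :
  exists k m : nat,
    [/\ (1 <= k)%N, (k%:Z <= maxdet01 n)%R, is_OPT S D k m &
      forall T : R, 0 < T ->
        egalitarian_value S D T (k%:R / m%:R) /\
        forall B, is_kpacking S D k B -> size B = m ->
          is_schedule S D T (packing_schedule T B) /\
          forall i, conn_time (packing_schedule T B) i / T = k%:R / m%:R].
Proof.
have D_ge0 i : 0 <= D i by case/andP: (hD i) => /ltW.
have D_leS i : D i <= S by case/andP: (hD i).
pose ratio k (r : R) := exists m, is_OPT S D k m /\ r = k%:R / m%:R.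
have ratio_total k : exists r, ratio k r.
  by have [m Hm] := exists_OPT D_leS k; exists (k%:R / m%:R), m.
have ratio_functional k r r' : ratio k r -> ratio k r' -> r = r'.
  by move=> [m [Hm ->]] [m' [Hm' ->]]; rewrite (is_OPT_functional Hm Hm').
have N0 : (0 < `|maxdet01 n|)%N by have := maxdet01_ge1 n; lia.
have [k [_ [/andP[k0 kN] [m [Hm ->]] best]]] := exists_max_rel ratio_total ratio_functional N0.
have kmax : k%:Z <= maxdet01 n by have := maxdet01_ge1 n; lia.
exists k, m; split=> // T T0; split; last first.
  by move=> Bs kBs <-; apply: packing_schedule_spec.
split.
  have [[Bs [kBs <-]] _] := Hm; exists (packing_schedule T Bs).
  by have [sch ct] := packing_schedule_spec hn k0 T0 kBs; split=> // i; rewrite ct.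
move=> s sch; have [i [k' [m' [k'0 k'max Hm' le]]]] := schedule_le_OPT_ratio D_ge0 D_leS hn T0 sch.
exists i; apply: le_trans le (best k' _ _ _); last by exists m'.
by rewrite k'0; lia.
Qed.
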